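(* Let $M$ be a monoid, $\mathcal F$ a Grothendieck topology on $M$, and $A$ a filtered left $M$-set with corresponding point $\mathsf p_A$ of $\mathscr{Sets}_M$. Then $\mathsf p_A\pitchfork \mathbf{Sh}(\mathcal F)$ if and only if for every $\mathfrak a\in\mathcal F$ the canonical map $\mathfrak a\otimes_M A\to A$, $x\otimes a\mapsto xa$, is a bijection.
   Context: $\mathscr{Sets}_M$ is the topos of right $M$-sets. A left $M$-set $A$ is filtered if $(-)\otimes_M A$ from right $M$-sets to sets preserves finite limits; the associated point $\mathsf p_A$ has inverse image $X\mapsto X\otimes_M A$ and direct image $\mathsf p_{A*}(S)=\mathrm{Hom}_{\mathrm{Sets}}(A,S)$ with right action $(\alpha m)(a)=\alpha(ma)$. For a right ideal $\mathfrak a$ and $m\in M$, $(\mathfrak a:m)=\{x\in M\mid mx\in\mathfrak a\}$. A Grothendieck topology on $M$ is a set $\mathcal F$ of right ideals such that (T1) $M\in\mathcal F$; (T2) $\mathfrak a\in\mathcal F$, $m\in M$ imply $(\mathfrak a:m)\in\mathcal F$; (T3) if $\mathfrak b\in\mathcal F$ and $\mathfrak a$ is a right ideal with $(\mathfrak a:b)\in\mathcal F$ for all $b\in\mathfrak b$, then $\mathfrak a\in\mathcal F$. A right $M$-set $X$ is an $\mathcal F$-sheaf if for every $\mathfrak a\in\mathcal F$ the map $X\to\mathrm{Hom}_M(\mathfrak a,X)$, $x\mapsto(y\mapsto xy)$, is a bijection; $\mathbf{Sh}(\mathcal F)$ is the full subcategory of sheaves. For a point $\mathsf p$ and a full subcategory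 $\mathscr T$, $\mathsf p\pitchfork\mathscr T$ means $\mathsf p_*(S)\in\mathscr T$ for every set $S$. *)

From Stdlib Require Import Relations ClassicalEpsilon FunctionalExtensionality.

Set Implicit Arguments.
Unset Strict Implicit.

Record monoid := Monoid {
  mcar :> Type;
  mmul : mcar -> mcar -> mcar;
  mone : mcar;
  massoc : forall x y z, mmul x (mmul y z) = mmul (mmul x y) z;
  mone_l : forall x, mmul mone x = x;
  mone_r : forall x, mmul x mone = x }.

Record rmset (M : monoid) := RMSet {
  rcar :> Type;
  ract : rcar -> M -> rcar;
  ract_one : forall x, ract x (@mone M) = x;
  ract_mul : forall x m n, ract (ract x m) n = ract x (@mmul M m n) }.

Record lmset (M : monoid) := LMSet {
  lcar :> Type;
  lact : M -> lcar -> lcar;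
  lact_one : forall a, lact (@mone M) a = a;
  lact_mul : forall m n a, lact m (lact n a) = lact (@mmul M m n) a }.

Arguments ract {M} r _ _.
Arguments lact {M} l _ _.

Record rhom (M : monoid) (X Y : rmset M) := RHom {
  hfun :> X -> Y;
  hequiv : forall x m, hfun (ract X x m) = ract Y (hfun x) m }.

Definition bij (U V : Type) (f : U -> V) : Prop :=
  (forall u u', f u = f u' -> u = u') /\ (forall v, exists u, f u = v).

Section Tensor.
Variables (M : monoid) (X : rmset M) (A : lmset M).

Definition tgen (p q : X * A) : Prop :=
  exists (x : X) (m : M) (a : A), p = (ract X x m, a) /\ q = (x, lact A m a).

Definition trel : relation (X * A) := clos_refl_sym_trans _ tgen.

(* the quotient (X * A)/trel, as the type of equivalence classes *)
Definition tensor : Type := { P : X * A -> Prop | exists p, P = trel p }.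

Definition tens (x : X) (a : A) : tensor :=
  exist _ (trel (x, a)) (ex_intro _ (x, a) eq_refl).

Definition trep (t : tensor) : X * A :=
  proj1_sig (constructive_indefinite_description _ (proj2_sig t)).
End Tensor.

Definition tmap (M : monoid) (X Y : rmset M) (A : lmset M) (f : X -> Y)
  (t : tensor X A) : tensor Y A :=
  let p := trep t in @tens M Y A (f (fst p)) (snd p).

Definition unit_rmset (M : monoid) : rmset M :=
  @RMSet M unit (fun x _ => x) (fun x => eq_refl) (fun x _ _ => eq_refl).

Section Pullback.
Variables (M : monoid) (X Y Z : rmset M) (f : rhom X Z) (g : rhom Y Z).

Definition pb_car : Type := { p : X * Y | f (fst p) = g (snd p) }.

Definition pb_act (p : pb_car) (m : M) : pb_car.
Proof.
  refine (exist _ (ract X (fst (proj1_sig p)) m, ract Y (snd (proj1_sig p)) m) _).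
  simpl. rewrite !hequiv, (proj2_sig p). reflexivity.
Defined.

Lemma pb_act_one : forall p, pb_act p (@mone M) = p.
Proof.
  intros [[x y] e]. unfold pb_act; simpl.
  apply eq_sig_hprop.
  - intros; apply Classical_Prop.proof_irrelevance.
  - simpl. rewrite !ract_one. reflexivity.
Qed.

Lemma pb_act_mul : forall p m n, pb_act (pb_act p m) n = pb_act p (@mmul M m n).
Proof.
  intros [[x y] e] m n. apply eq_sig_hprop.
  - intros; apply Classical_Prop.proof_irrelevance.
  - simpl. rewrite !ract_mul. reflexivity.
Qed.

Definition pullback : rmset M := RMSet pb_act_one pb_act_mul.

Definition pb1 (p : pullback) : X := fst (proj1_sig p).
Definition pb2 (p : pullback) : Y := snd (proj1_sig p).
End Pullback.

(* ---------- filtered left M-sets ----------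
   (-) (x)_M A : Sets_M -> Sets preserves finite limits, i.e. it preserves the
   terminal object and pullbacks (these generate all finite limits). *)
Definition filtered (M : monoid) (A : lmset M) : Prop :=
  (exists t : tensor (unit_rmset M) A, forall t', t' = t) /\
  (forall (X Y Z : rmset M) (f : rhom X Z) (g : rhom Y Z),
     let c := fun t : tensor (pullback f g) A =>
                (tmap (@pb1 M X Y Z f g) t, tmap (@pb2 M X Y Z f g) t) in
     (forall t t', c t = c t' -> t = t') /\
     (forall uv : tensor X A * tensor Y A,
        tmap f (fst uv) = tmap g (snd uv) -> exists t, c t = uv)).

(* ---------- direct image of the point p_A ----------
   p_{A*}(S) = Hom_Sets(A, S) with (alpha m)(a) = alpha (m a). *)
Section Pstar.
Variables (M : monoid) (A : lmset M) (S : Type).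

Definition pstar_act (al : A -> S) (m : M) : A -> S := fun a => al (lact A m a).

Lemma pstar_one : forall al, pstar_act al (@mone M) = al.
Proof. intros al; apply functional_extensionality; intro a.
  unfold pstar_act; rewrite lact_one; reflexivity. Qed.

Lemma pstar_mul : forall al m n, pstar_act (pstar_act al m) n = pstar_act al (@mmul M m n).
Proof. intros al m n; apply functional_extensionality; intro a.
  unfold pstar_act; rewrite lact_mul; reflexivity. Qed.

Definition pstar : rmset M := RMSet pstar_one pstar_mul.
End Pstar.

Definition right_ideal (M : monoid) (I : M -> Prop) : Prop :=
  forall x m, I x -> I (@mmul M x m).

Definition colon (M : monoid) (I : M -> Prop) (m : M) : M -> Prop :=
  fun x => I (@mmul M m x).

Section IdealRMSet.
Variables (M : monoid) (I : M -> Prop) (HI : right_ideal I).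

Definition id_act (y : {m : M | I m}) (m : M) : {m : M | I m} :=
  exist _ (@mmul M (proj1_sig y) m) (HI m (proj2_sig y)).

Lemma id_act_one : forall y, id_act y (@mone M) = y.
Proof. intros [y hy]. apply eq_sig_hprop.
  - intros; apply Classical_Prop.proof_irrelevance.
  - simpl; apply mone_r. Qed.

Lemma id_act_mul : forall y m n, id_act (id_act y m) n = id_act y (@mmul M m n).
Proof. intros [y hy] m n. apply eq_sig_hprop.
  - intros; apply Classical_Prop.proof_irrelevance.
  - simpl; symmetry; apply massoc. Qed.

Definition ideal_rmset : rmset M := RMSet id_act_one id_act_mul.
End IdealRMSet.

Record grothendieck_topology (M : monoid) (F : (M -> Prop) -> Prop) : Prop := {
  top_ideal : forall I, F I -> right_ideal I;
  top_T1 : F (fun _ => True);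
  top_T2 : forall I m, F I -> F (colon I m);
  top_T3 : forall I J, F J -> right_ideal I ->
             (forall b, J b -> F (colon I b)) -> F I }.

(* X is an F-sheaf: for every a in F, X -> Hom_M(a, X), x |-> (y |-> x y),
   is a bijection (homs compared extensionally). *)
Definition is_sheaf (M : monoid) (F : (M -> Prop) -> Prop)
  (HF : grothendieck_topology F) (X : rmset M) : Prop :=
  forall I (HI : F I),
    (forall x x' : X,
       (forall y : ideal_rmset (top_ideal HF HI), ract X x (proj1_sig y) = ract X x' (proj1_sig y)) ->
       x = x') /\
    (forall h : rhom (ideal_rmset (top_ideal HF HI)) X,
       exists x : X, forall y, h y = ract X x (proj1_sig y)).

(* p_A "pitchfork" Sh(F): p_{A*}(S) is a sheaf for every set S *)
Definition pitchfork_sh (M : monoid) (F : (M -> Prop) -> Prop)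
  (HF : grothendieck_topology F) (A : lmset M) : Prop :=
  forall S : Type, is_sheaf HF (pstar A S).

Definition ideal_mult (M : monoid) (I : M -> Prop) (HI : right_ideal I) (A : lmset M)
  (t : tensor (ideal_rmset HI) A) : A :=
  let p := trep t in lact A (proj1_sig (fst p)) (snd p).

(* The argument works one right ideal a at a time:
   - the tensor product a (x)_M A is the quotient of a * A by the relation
     generated by (y m, b) ~ (y, m b), so maps out of it are exactly the maps
     on pairs respecting that relation (tlift, tlift_tens);
   - separation of every p_{A*}(S) at a is equivalent to surjectivity of the
     multiplication map: surjectivity makes the values y b cover A, and
     conversely the predicate "is in the image" agrees with "True" after
     restriction along a (surj_separated, separated_surj);
   - the map y |-> (b |-> y (x) b) is an M-morphism a -> p_{A*}(a (x)_M A); a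
     glued element for it is a left inverse of the multiplication map, which
     is therefore injective (glues_inj); conversely, given a bijection, an
     M-morphism h : a -> p_{A*}(S) induces a map on a (x)_M A whose composite
     with the inverse bijection glues h (bij_glues). *)
From Stdlib Require Import Relations ClassicalEpsilon FunctionalExtensionality PropExtensionality.
Set Implicit Arguments.
Unset Strict Implicit.

Section TensorQuotient.
Variables (M : monoid) (X : rmset M) (A : lmset M).

Lemma trel_class (p q : X * A) : trel p q -> trel p = trel q.
Proof.
  intro Hpq. apply functional_extensionality; intro r.
  apply propositional_extensionality; split; intro Hr.
  - exact (rst_trans _ _ _ _ _ (rst_sym _ _ _ _ Hpq) Hr).
  - exact (rst_trans _ _ _ _ _ Hpq Hr).
Qed.

Lemma tens_trep (t : tensor X A) : tens (fst (trep t)) (snd (trep t)) = t.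
Proof.
  destruct t as [P HP]. unfold trep, tens; simpl.
  destruct (constructive_indefinite_description _ HP) as [p Hp]; simpl.
  apply eq_sig_hprop.
  - intros; apply proof_irrelevance.
  - simpl. rewrite <- surjective_pairing. symmetry; exact Hp.
Qed.

Lemma tens_balanced (x : X) (m : M) (a : A) :
  tens (ract X x m) a = tens x (lact A m a).
Proof.
  apply eq_sig_hprop.
  - intros; apply proof_irrelevance.
  - apply trel_class, rst_step. exists x, m, a. split; reflexivity.
Qed.

Definition tlift (S : Type) (g : X * A -> S) (t : tensor X A) : S := g (trep t).

Lemma tlift_tens (S : Type) (g : X * A -> S)
  (Hg : forall p q, tgen p q -> g p = g q) (x : X) (a : A) :
  tlift g (tens x a) = g (x, a).
Proof.
  assert (Hrel : trel (x, a) (trep (tens x a))).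
  { unfold trep. destruct (constructive_indefinite_description _ _) as [p Hp].
    simpl in *. rewrite Hp. apply rst_refl. }
  unfold tlift. symmetry.
  induction Hrel; [apply Hg; assumption | reflexivity | congruence | congruence].
Qed.
End TensorQuotient.

Section IdealPoint.
Variables (M : monoid) (I : M -> Prop) (HI : right_ideal I) (A : lmset M).

Let J : rmset M := ideal_rmset HI.
Local Notation mult := (@ideal_mult M I HI A).

Definition separated_at (X : rmset M) : Prop :=
  forall x x' : X, (forall y : J, ract X x (proj1_sig y) = ract X x' (proj1_sig y)) -> x = x'.

Definition glues_at (X : rmset M) : Prop :=
  forall h : rhom J X, exists x : X, forall y, h y = ract X x (proj1_sig y).

Lemma ideal_mult_tens (y : J) (a : A) : mult (tens y a) = lact A (proj1_sig y) a.
Proof.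
  apply (tlift_tens (g := fun p : J * A => lact A (proj1_sig (fst p)) (snd p))).
  intros p q [x [m [b [-> ->]]]]; simpl. symmetry; apply lact_mul.
Qed.

Lemma surj_separated (S : Type) :
  (forall b : A, exists t, mult t = b) -> separated_at (pstar A S).
Proof.
  intros Hsurj al al' Hres. apply functional_extensionality; intro b.
  destruct (Hsurj b) as [t <-].
  rewrite <- (tens_trep t), ideal_mult_tens.
  exact (f_equal (fun f => f (snd (trep t))) (Hres (fst (trep t)))).
Qed.

(* Separation of p_{A*}(Prop): the image predicate of the multiplication map
   restricts to the same thing as True, hence is True. *)
Lemma separated_surj :
  separated_at (pstar A Prop) -> forall b : A, exists t, mult t = b.
Proof.
  intros Hsep b.
  assert (Himage : (fun b : A => exists t, mult t = b) = (fun _ => True)).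
  { apply Hsep. intro y. apply functional_extensionality; intro a.
    simpl; unfold pstar_act.
    apply propositional_extensionality; split; [auto | intros _].
    exists (tens y a). apply ideal_mult_tens. }
  change ((fun b : A => exists t, mult t = b) b).
  rewrite Himage. trivial.
Qed.

Definition tens_hom : rhom J (pstar A (tensor J A)).
Proof.
  refine (@RHom M J (pstar A (tensor J A)) (fun y a => tens y a) _).
  intros y m. apply functional_extensionality; intro a. apply tens_balanced.
Defined.

(* A glued element for tens_hom is a left inverse of the multiplication map. *)
Lemma glues_inj :
  glues_at (pstar A (tensor J A)) -> forall t t', mult t = mult t' -> t = t'.
Proof.
  intro Hglue. destruct (Hglue tens_hom) as [al Hal].
  assert (Hretract : forall t, t = al (mult t)).
  { intro t. rewrite <- (tens_trep t), ideal_mult_tens.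
    exact (f_equal (fun f => f (snd (trep t))) (Hal (fst (trep t)))). }
  intros t t' Heq. rewrite (Hretract t), (Hretract t'), Heq. reflexivity.
Qed.

(* If the multiplication map is bijective, every h : I -> p_{A*}(S) is glued by
   the map a |-> h~(mult^-1 a), where h~ : I (x)_M A -> S is induced by h. *)
Lemma bij_glues (S : Type) : bij mult -> glues_at (pstar A S).
Proof.
  intros [Hinj Hsurj] h.
  set (g := fun p : J * A => h (fst p) (snd p)).
  assert (Hg : forall p q, tgen p q -> g p = g q).
  { intros p q [x [m [a [-> ->]]]]. exact (f_equal (fun f => f a) (hequiv h x m)). }
  set (inv := fun b : A => proj1_sig (constructive_indefinite_description _ (Hsurj b))).
  exists (fun b => tlift g (inv b)).
  intro y. apply functional_extensionality; intro a. simpl. unfold pstar_act.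
  assert (Hinv : inv (lact A (proj1_sig y) a) = tens y a).
  { apply Hinj. rewrite ideal_mult_tens. unfold inv.
    destruct (constructive_indefinite_description _ _) as [t Ht]. exact Ht. }
  rewrite Hinv, (tlift_tens Hg). reflexivity.
Qed.
End IdealPoint.

Theorem lemma4p1 (M : monoid) (F : (M -> Prop) -> Prop)
  (HF : grothendieck_topology F) (A : lmset M) (HA : filtered A) :
  pitchfork_sh HF A <->
  (forall I (HI : F I), bij (@ideal_mult M I (top_ideal HF HI) A)).
Proof.
  split.
  - intros Hsheaf I HI. split.
    + apply glues_inj.
      exact (proj2 (Hsheaf (tensor (ideal_rmset (top_ideal HF HI)) A) I HI)).
    + apply separated_surj. exact (proj1 (Hsheaf Prop I HI)).
  - intros Hbij S I HI. split.
    + apply surj_separated. exact (proj2 (Hbij I HI)).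
    + apply bij_glues. exact (Hbij I HI).
Qed.
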